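(* Let $A$ be a Keigher ring and $X=\operatorname{Spec}^\Delta A$. Let $\varphi(X)\colon\mathcal O(X)\to\mathcal O'(X)$ be the homomorphism $\varphi(X)(f)(\mathfrak p)=f(\mathfrak p)\bmod \mathfrak pA_{\mathfrak p}$ (the image of $f(\mathfrak p)\in A_{\mathfrak p}$ in the residue field $A_{\mathfrak p}/\mathfrak pA_{\mathfrak p}=K(\mathfrak p)$). Then $\ker\varphi(X)$ equals the nilradical of $\mathcal O(X)$.
   Context: All rings are commutative with unit. A differential ring is a ring with finitely many pairwise commuting derivations. A Keigher ring is a differential ring in which the radical $\{x: x^n\in\mathfrak a\text{ for some }n\}$ of every differential ideal $\mathfrak a$ is again a differential ideal. $X=\operatorname{Spec}^\Delta A$ is the set of prime ideals of $A$ closed under all derivations, with the Kolchin topology (closed sets $V(E)=\{\mathfrak p: E\subseteq\mathfrak p\}$). For $\mathfrak p\in X$, $A_{\mathfrak p}$ is the localization at $A\setminus\mathfrak p$ and $K(\mathfrak p)$ is the fraction field of $A/\mathfrak p$. Structure sheaf: for open $U\subseteq X$, $\mathcal O(U)$ is the set of functions $f$ on $U$ with $f(\mathfrak p)\in A_{\mathfrak p}$ that are regular at every point of $U$, where $f$ is regular at $\mathfrak p$ if there exist an open neighborhood $W\subseteq U$ of $\mathfrak p$ and $a,b\in A$ with $b\notin\mathfrak q$ and $f(\mathfrak q)=a/b$ in $A_{\mathfrak q}$ for all $\mathfrak q\in W$; it is a differential ring with pointwise operations and derivations. Analogously, $\mathcal O'(U)$ is the set of functions $f$ on $U$ with $f(\mathfrak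 p)\in K(\mathfrak p)$ that are regular at every point of $U$, where regularity means locally $f(\mathfrak q)=a/b$ in $K(\mathfrak q)$ with $b\notin\mathfrak q$. *)

From mathcomp Require Import all_boot all_algebra.
Set Implicit Arguments. Unset Strict Implicit. Unset Printing Implicit Defensive.
Import GRing.Theory.
Local Open Scope ring_scope.

Section Diff.
Variable A : comPzRingType.

Definition is_ideal (I : A -> Prop) : Prop :=
  [/\ I 0, (forall x y, I x -> I y -> I (x + y)) & (forall r x, I x -> I (r * x))].

Definition is_prime (P : A -> Prop) : Prop :=
  [/\ is_ideal P, ~ P 1 & (forall x y, P (x * y) -> P x \/ P y)].

Definition is_derivation (d : A -> A) : Prop :=
  (forall x y, d (x + y) = d x + d y) /\ (forall x y, d (x * y) = x * d y + y * d x).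

Definition is_diff_structure (n : nat) (D : 'I_n -> A -> A) : Prop :=
  (forall i, is_derivation (D i)) /\ (forall i j x, D i (D j x) = D j (D i x)).

Definition is_diff_ideal n (D : 'I_n -> A -> A) (I : A -> Prop) : Prop :=
  is_ideal I /\ (forall i x, I x -> I (D i x)).

Definition radical (I : A -> Prop) : A -> Prop := fun x => exists m : nat, I (x ^+ m).

Definition keigher n (D : 'I_n -> A -> A) : Prop :=
  forall I, is_diff_ideal D I -> is_diff_ideal D (radical I).

Definition is_diff_prime n (D : 'I_n -> A -> A) (P : A -> Prop) : Prop :=
  is_prime P /\ (forall i x, P x -> P (D i x)).

(* Points of X = Spec^Delta A. *)
Record dpoint n (D : 'I_n -> A -> A) := DPoint {
  dcarrier :> A -> Prop;
  dpoint_prime : is_diff_prime D dcarrier }.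

Definition kolchin_open n (D : 'I_n -> A -> A) (U : dpoint D -> Prop) : Prop :=
  exists E : A -> Prop, forall q : dpoint D, U q <-> ~ (forall x, E x -> q x).

(* Elements of A_p are represented by fractions (a, b) with b not in p;
   equality in A_p: a/b = a'/b' iff s (a b' - a' b) = 0 for some s not in p. *)
Definition loc_eq (P : A -> Prop) (u v : A * A) : Prop :=
  exists s, ~ P s /\ s * (u.1 * v.2 - v.1 * u.2) = 0.

(* Equality in K(p) = Frac(A/p): (a mod p)/(b mod p) = (a' mod p)/(b' mod p)
   iff a b' - a' b lies in p. *)
Definition frac_eq (P : A -> Prop) (u v : A * A) : Prop :=
  P (u.1 * v.2 - v.1 * u.2).

Definition in_O n (D : 'I_n -> A -> A) (U : dpoint D -> Prop)
    (f : dpoint D -> A * A) : Prop :=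
  (forall p : dpoint D, U p -> ~ p (f p).2) /\
  forall p : dpoint D, U p ->
    exists W : dpoint D -> Prop,
      [/\ kolchin_open W, W p, (forall q, W q -> U q) &
          exists a b : A, forall q : dpoint D, W q -> ~ q b /\ loc_eq q (f q) (a, b)].

Definition in_O' n (D : 'I_n -> A -> A) (U : dpoint D -> Prop)
    (f : dpoint D -> A * A) : Prop :=
  (forall p : dpoint D, U p -> ~ p (f p).2) /\
  forall p : dpoint D, U p ->
    exists W : dpoint D -> Prop,
      [/\ kolchin_open W, W p, (forall q, W q -> U q) &
          exists a b : A, forall q : dpoint D, W q -> ~ q b /\ frac_eq q (f q) (a, b)].

Definition full n (D : 'I_n -> A -> A) : dpoint D -> Prop := fun _ => True.

(* phi(X): the fraction a/b in A_p is sent to (a mod p)/(b mod p) in K(p). *)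
Definition phi n (D : 'I_n -> A -> A) (f : dpoint D -> A * A) : dpoint D -> A * A :=
  fun p => f p.

Definition loc_pow (u : A * A) (k : nat) : A * A := (u.1 ^+ k, u.2 ^+ k).

Definition in_ker_phi n (D : 'I_n -> A -> A) (f : dpoint D -> A * A) : Prop :=
  forall p : dpoint D, frac_eq p (phi f p) (0, 1).

(* f lies in the nilradical of O(X): f^k = 0 in O(X) for some k
   (equality in O(X) is pointwise equality in A_p, 0 = 0/1). *)
Definition in_nilradical_O n (D : 'I_n -> A -> A) (f : dpoint D -> A * A) : Prop :=
  exists k : nat, forall p : dpoint D, loc_eq p (loc_pow (f p) k) (0, 1).

End Diff.

From mathcomp Require Import all_boot all_algebra.
From mathcomp Require Import boolp classical_sets.

(* If f^k = s^-1 * 0 in every A_p, the numerator of f(p) lies in p, so phi(X)(f) = 0.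

   Conversely, assume the numerator of f(q) lies in q for every q.  Call y a
   "nilpotence witness" when f is uniformly nilpotent on the basic open set D(y):
   f(q)^k = 0 in A_q for one k and all q not containing y.  These y form a
   differential ideal.  Near each point p, f = a/b on some D(e) with e outside p;
   there a lies in every q, so e*a lies in every differential prime, hence is
   nilpotent by the differential Krull lemma, and some power of e is a witness.
   Thus the witness ideal is contained in no differential prime, so by the Krull
   lemma again it contains 1, which says f is nilpotent in O(X).

   The differential Krull lemma (a differential ideal avoiding the powers of x
   lies in a differential prime avoiding x) is where the Keigher hypothesis is
   used: a maximal differential ideal avoiding the powers of x is radical, so its
   colon ideals are differential, and this makes it prime. *)

Set Implicit Arguments. Unset Strict Implicit. Unset Printing Implicit Defensive.
Import GRing.Theory.
Local Open Scope classical_set_scope.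

Lemma Zorn_above (T : Type) (P : set (set T)) (K0 : set T) : P K0 ->
  (forall C : set (set T), C `<=` P -> total_on C subset -> C !=set0 ->
     P (\bigcup_(X in C) X)) ->
  exists M, [/\ P M, K0 `<=` M & forall K, P K -> M `<=` K -> K `<=` M].
Proof.
move=> PK0 Pchain.
pose S := {K : set T | P K /\ K0 `<=` K}.
pose R (X Y : S) := `[< sval X `<=` sval Y >].
pose bottom : S := exist _ K0 (conj PK0 (@subset_refl _ K0)).
have [||C totC|M maxM] := @ZL_preorder S bottom R.
- by move=> X; apply/asboolP.
- by move=> X Y Z /asboolP XY /asboolP YZ; apply/asboolP; exact: subset_trans YZ.
- have [[X0 CX0]|C0] := pselect (C !=set0); last first.
    by exists bottom => X CX; exfalso; apply: C0; exists X.
  have CU : [set sval X | X in C] `<=` P by move=> _ [X _ <-]; case: (svalP X).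
  have totU : total_on [set sval X | X in C] subset.
    by move=> _ _ [X CX <-] [Y CY <-]; have [/asboolP|/asboolP] := totC _ _ CX CY; [left|right].
  have neU : [set sval X | X in C] !=set0 by exists (sval X0); exact: imageP.
  have K0U : K0 `<=` \bigcup_(K in [set sval X | X in C]) K.
    by move=> t K0t; exists (sval X0); [exact: imageP|case: (svalP X0) => _; apply].
  exists (exist (fun K => P K /\ K0 `<=` K) _ (conj (Pchain _ CU totU neU) K0U)) => X CX.
  by apply/asboolP; apply: (bigcup_sup (imageP sval CX)).
- exists (sval M); case: M maxM => M [PM K0M] /= maxM; split=> // K PK MK.
  have K0K : K0 `<=` K by exact: subset_trans MK.
  by have /asboolP := maxM (exist _ K (conj PK K0K)) (asboolT MK).
Qed.

Local Open Scope ring_scope.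

Section Ideals.
Variable A : comPzRingType.
Implicit Types (I P : A -> Prop) (x y r : A).

Lemma ideal0 I : is_ideal I -> I 0.
Proof. by case. Qed.

Lemma idealD I x y : is_ideal I -> I x -> I y -> I (x + y).
Proof. by case=> _ hD _; apply: hD. Qed.

Lemma idealMl I r x : is_ideal I -> I x -> I (r * x).
Proof. by case=> _ _ hM; apply: hM. Qed.

Lemma idealMr I r x : is_ideal I -> I x -> I (x * r).
Proof. by move=> hI hx; rewrite mulrC; apply: idealMl. Qed.

Lemma idealB I x y : is_ideal I -> I x -> I y -> I (x - y).
Proof. by move=> hI hx hy; apply: idealD => //; rewrite -mulN1r; apply: idealMl. Qed.

Lemma prime_ideal P : is_prime P -> is_ideal P.
Proof. by case. Qed.

Lemma prime_mul P x y : is_prime P -> P (x * y) -> P x \/ P y.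
Proof. by case=> _ _; apply. Qed.

Lemma prime_pow P x k : is_prime P -> P (x ^+ k) -> P x.
Proof.
case=> _ P1 Pmul; elim: k => [|k IHk]; first by rewrite expr0 => /P1.
by rewrite exprS => /Pmul [|/IHk].
Qed.

Lemma prime_nmul P x y : is_prime P -> ~ P x -> ~ P y -> ~ P (x * y).
Proof. by move=> hP hx hy /(prime_mul hP) []. Qed.

Lemma prime_npow P x k : is_prime P -> ~ P x -> ~ P (x ^+ k).
Proof. by move=> hP hx /(prime_pow hP). Qed.

End Ideals.

Section DifferentialKrull.
Variables (A : comPzRingType) (n : nat) (D : 'I_n -> A -> A).
Hypothesis hD : is_diff_structure D.
Hypothesis hK : keigher D.
Implicit Types (I J : A -> Prop) (x y u : A).

Lemma zero_diff_ideal : is_diff_ideal D (fun y => y = 0).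
Proof.
split; first by split=> [|y z -> ->|r y ->]; rewrite ?addr0 ?mulr0.
move=> i y ->; apply: (@addrI _ (D i 0)).
by rewrite -(proj1 (proj1 hD i)) !addr0.
Qed.

Definition colon I u : A -> Prop := fun y => I (y * u).

(* The colon ideal (I : u) of a radical differential ideal is differential:
   from y u in I one gets u^2 D(y) in I, hence (u D(y))^2 in I. *)
Lemma colon_diff_ideal I u : is_diff_ideal D I -> (forall y, radical I y -> I y) ->
  is_diff_ideal D (colon I u).
Proof.
move=> [hI hID] Irad; split.
  split; rewrite /colon; first by rewrite mul0r; apply: ideal0.
    by move=> x y hx hy; rewrite mulrDl; apply: idealD.
  by move=> r x hx; rewrite -mulrA; apply: idealMl.
move=> i y; rewrite /colon => hyu.
have hDyu := hID i _ hyu; rewrite (proj2 (proj1 hD i)) in hDyu.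
have hu2Dy : I (u * u * D i y).
  have -> : u * u * D i y = u * (y * D i u + u * D i y) - D i u * (y * u).
    by rewrite mulrDr mulrA (mulrC u y) (mulrC (D i u)) addrC addKr mulrA.
  by apply: idealB => //; apply: idealMl.
apply: Irad; exists 2%N.
have -> : (D i y * u) ^+ 2 = D i y * (u * u * D i y).
  by rewrite expr2 -!mulrA (mulrC (D i y) u).
exact: idealMl.
Qed.

Lemma diff_krull J x : is_diff_ideal D J -> (forall m, ~ J (x ^+ m)) ->
  exists P, [/\ is_diff_prime D P, J `<=` P & ~ P x].
Proof.
move=> hJ Jx.
pose good K := is_diff_ideal D K /\ forall m, ~ K (x ^+ m).
have chain_good C : C `<=` good -> total_on C subset -> C !=set0 ->
    good (\bigcup_(K in C) K).
  move=> Cgood Ctot [K0 CK0]; have [[hK0 _] _] := Cgood _ CK0.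
  split; last by move=> m [K CK]; apply: (Cgood _ CK).2.
  split; first split.
  - by exists K0 => //; apply: ideal0.
  - move=> a1 a2 [K1 CK1 K1a1] [K2 CK2 K2a2].
    have [K12|K21] := Ctot _ _ CK1 CK2.
      by exists K2 => //; apply: idealD (K12 _ K1a1) K2a2; case: (Cgood _ CK2) => [[]].
    by exists K1 => //; apply: idealD K1a1 (K21 _ K2a2); case: (Cgood _ CK1) => [[]].
  - by move=> r a [K CK Ka]; exists K => //; apply: idealMl; case: (Cgood _ CK) => [[]].
  - by move=> i a [K CK Ka]; exists K => //; case: (Cgood _ CK) => [[_ KD]] _; apply: KD.
have [I [[hI Ix] JI Imax]] := Zorn_above (conj hJ Jx) chain_good.
have [hIi hID] := hI.
(* Maximality and the Keigher property make I radical. *)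
have Irad : forall y, radical I y -> I y.
  apply: Imax; last by move=> y Iy; exists 1%N; rewrite expr1.
  by split; [exact: hK | move=> m [j]; rewrite -exprM; apply: Ix].
have I_colon u : I `<=` colon I u by move=> a Ia; apply: idealMr.
exists I; split=> //; last by rewrite -[x]expr1; apply: Ix.
split=> //; split=> //; first by rewrite -(expr0 x); apply: Ix.
move=> y z Iyz; apply: contrapT => /not_orP [Iy Iz].
have [[m Ixm]|noxm] := pselect (exists m, colon I y (x ^+ m)).
- (* (I : x^m) avoids the powers of x and contains y. *)
  have Iy_col : colon I (x ^+ m) y by rewrite /colon mulrC.
  apply/Iy/(Imax _ _ (I_colon _) _ Iy_col); split; first exact: colon_diff_ideal.
  by move=> j; rewrite /colon -exprD; apply: Ix.
- (* (I : y) avoids the powers of x and contains z. *)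
  have Iz_col : colon I y z by rewrite /colon mulrC.
  apply/Iz/(Imax _ _ (I_colon _) _ Iz_col).
  by split; [exact: colon_diff_ideal | move=> j hj; apply: noxm; exists j].
Qed.

Lemma in_all_dpoints_nilpotent x : (forall q : dpoint D, q x) -> exists m, x ^+ m = 0.
Proof.
move=> allq; apply: contrapT => nilx.
have no_pow0 m : ~ x ^+ m = 0 by move=> xm0; apply: nilx; exists m.
have [P [hP _ Px]] := diff_krull zero_diff_ideal no_pow0.
exact: Px (allq (DPoint hP)).
Qed.

Lemma proper_diff_ideal_in_dpoint J : is_diff_ideal D J -> ~ J 1 ->
  exists q : dpoint D, J `<=` q.
Proof.
move=> hJ J1; have no1 m : ~ J (1 ^+ m) by rewrite expr1n.
have [P [hP JP _]] := diff_krull hJ no1.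
by exists (DPoint hP).
Qed.

End DifferentialKrull.

Section StructureSheaf.
Variables (A : comPzRingType) (n : nat) (D : 'I_n -> A -> A).
Implicit Types (p q : dpoint D) (f : dpoint D -> A * A) (u : A * A).

Lemma dpoint_is_prime q : is_prime q.
Proof. by case: (dpoint_prime q). Qed.

Lemma loc_eq0 (P : A -> Prop) u : loc_eq P u (0, 1) <-> exists s, ~ P s /\ s * u.1 = 0.
Proof. by rewrite /loc_eq /= mulr1 mul0r subr0. Qed.

Lemma frac_eq0 (P : A -> Prop) u : frac_eq P u (0, 1) <-> P u.1.
Proof. by rewrite /frac_eq /= mulr1 mul0r subr0. Qed.

Lemma loc_nilpotent_num q u k : loc_eq q (loc_pow u k) (0, 1) -> q u.1.
Proof.
move=> /loc_eq0 [s [qs su0]]; have qP := dpoint_is_prime q.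
have : q (s * u.1 ^+ k) by rewrite su0; apply: ideal0 (prime_ideal qP).
by case/(prime_mul qP) => // /(prime_pow qP).
Qed.

Lemma kolchin_open_basic (W : dpoint D -> Prop) p : kolchin_open W -> W p ->
  exists e, ~ p e /\ forall q, ~ q e -> W q.
Proof.
move=> [E hE] Wp; have [e [Ee pe]] : exists e, E e /\ ~ p e.
  apply: contrapT => noe; apply: (proj1 (hE p) Wp) => x Ex.
  by apply: contrapT => px; apply: noe; exists x.
by exists e; split=> // q qe; apply/hE => allE; apply: qe; apply: allE.
Qed.

Lemma in_O_basic f p : in_O (fun _ => True) f -> exists e a b, ~ p e /\
  forall q, ~ q e -> ~ q b /\ loc_eq q (f q) (a, b).
Proof.
case=> _ /(_ p I) [W [Wopen Wp _ [a [b hab]]]].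
have [e [pe eW]] := kolchin_open_basic Wopen Wp.
by exists e, a, b; split=> // q qe; apply: hab; apply: eW.
Qed.

Definition nil_witness f (y : A) : Prop :=
  exists k : nat, forall q, ~ q y -> loc_eq q (loc_pow (f q) k) (0, 1).

Lemma nil_witness_mono f q k k' : loc_eq q (loc_pow (f q) k) (0, 1) -> (k <= k')%N ->
  loc_eq q (loc_pow (f q) k') (0, 1).
Proof.
move=> /loc_eq0 [s [qs sfk]] kk'; apply/loc_eq0; exists s; split=> //=.
by rewrite -(subnKC kk') exprD mulrA sfk mul0r.
Qed.

Lemma nil_witness_diff_ideal f : is_diff_ideal D (nil_witness f).
Proof.
split; first split.
- by exists 0%N => q []; apply: ideal0 (prime_ideal (dpoint_is_prime q)).
- move=> y z [k1 h1] [k2 h2]; exists (k1 + k2)%N => q qyz.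
  have qI := prime_ideal (dpoint_is_prime q).
  have [qy|qy] := pselect (q y).
    have qz : ~ q z by move=> qz; apply: qyz; apply: idealD.
    by apply: nil_witness_mono (h2 q qz) _; rewrite leq_addl.
  by apply: nil_witness_mono (h1 q qy) _; rewrite leq_addr.
- move=> r y [k h]; exists k => q qry; apply: h => qy; apply: qry.
  exact: idealMl (prime_ideal (dpoint_is_prime q)) qy.
- move=> i y [k h]; exists k => q qDy; apply: h => qy; apply: qDy.
  by case: (dpoint_prime q) => _; apply.
Qed.

Lemma nil_witness1 f : nil_witness f 1 -> in_nilradical_O f.
Proof.
move=> [k hk]; exists k => q; apply: hk.
by case: (dpoint_is_prime q).
Qed.

Hypothesis hD : is_diff_structure D.
Hypothesis hK : keigher D.

(* On D(e) where f = a/b, the numerator a lies in every q, so (e a)^m = 0 for some m,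
   and then e^m (t b)^m kills f(q)^m in A_q, making e^(m+1) a witness. *)
Lemma ker_phi_witness_outside f p : in_O (fun _ => True) f -> in_ker_phi f ->
  exists y, nil_witness f y /\ ~ p y.
Proof.
move=> hf hker; have [hden _] := hf.
have [e [a [b [pe hab]]]] := in_O_basic p hf.
have a_in q : ~ q e -> q a.
  move=> qe; have [qb [t [qt et]]] := hab q qe.
  have qP := dpoint_is_prime q; have qI := prime_ideal qP.
  have qf1 : q (f q).1 by apply/frac_eq0; exact: hker q.
  have qdiff : q ((f q).1 * b - a * (f q).2).
    have : q (t * ((f q).1 * b - a * (f q).2)) by rewrite et; apply: ideal0.
    by case/(prime_mul qP).
  have qaf2 : q (a * (f q).2).
    have -> : a * (f q).2 = (f q).1 * b - ((f q).1 * b - a * (f q).2).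
      by rewrite opprB addrC subrK.
    by apply: idealB => //; apply: idealMr.
  by case/(prime_mul qP): qaf2 => // /hden; case.
have [m eam] : exists m, (e * a) ^+ m = 0.
  apply: (in_all_dpoints_nilpotent hD hK) => q.
  have qI := prime_ideal (dpoint_is_prime q).
  have [qe|qe] := pselect (q e); first exact: idealMr.
  exact: idealMl (a_in q qe).
exists (e ^+ m.+1); split; last exact: prime_npow (dpoint_is_prime p) pe.
exists m => q qem; have qP := dpoint_is_prime q.
have qe : ~ q e by move=> qe; apply: qem; rewrite exprS; apply: idealMr (prime_ideal qP) qe.
have [qb [t [qt et]]] := hab q qe.
have cross : t * b * (f q).1 = t * a * (f q).2.
  by apply/eqP; rewrite -subr_eq0 -et mulrBr !mulrA (mulrAC t b).
apply/loc_eq0; exists (e ^+ m * (t * b) ^+ m); split.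
  by apply: (prime_nmul qP); apply: (prime_npow qP) => //; exact: (prime_nmul qP).
by rewrite /= -mulrA -exprMn cross -mulrA mulrCA exprMn mulrA -exprMn eam mul0r.
Qed.

Lemma ker_phi_nilpotent f : in_O (fun _ => True) f -> in_ker_phi f -> in_nilradical_O f.
Proof.
move=> hf hker; apply: nil_witness1; apply: contrapT => no1.
have [p witness_in_p] := proper_diff_ideal_in_dpoint hD hK (nil_witness_diff_ideal f) no1.
have [y [wy py]] := ker_phi_witness_outside p hf hker.
exact: py (witness_in_p y wy).
Qed.

End StructureSheaf.

Theorem proposition3p1 (A : comPzRingType) (n : nat) (D : 'I_n -> A -> A)
  (hD : is_diff_structure D) (hK : keigher D)
  (f : dpoint D -> A * A) (hf : in_O (fun _ : dpoint D => True) f) :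
  in_ker_phi f <-> in_nilradical_O f.
Proof.
split; first exact: ker_phi_nilpotent.
move=> [k fk] p; apply/frac_eq0.
exact: loc_nilpotent_num (fk p).
Qed.
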